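(* Let $\mathfrak{g}$ be a real solvable Lie algebra of dimension $2n$ with basis $\{X_1,\dots,X_{4m},\dots,X_{2n}\}$ such that $b_1(\mathfrak{g})=4m$, and let $E$ be a paracomplex structure on $\mathfrak{g}$ with eigenspace decomposition $\mathfrak{g}=\mathfrak{g}_+\oplus\mathfrak{g}_-$. Suppose 1. $X_i\notin D^1\mathfrak{g}=[\mathfrak{g},\mathfrak{g}]$ for $1\le i\le 4m$; 2. $X_i\in\mathfrak{g}_+$ for $1\le i\le 2m$ and $X_i\in\mathfrak{g}_-$ for $2m+1\le i\le 4m$; 3. $b_1(\mathfrak{g}_+)=b_1(\mathfrak{g}_-)=2m$. Then $\mathfrak{g}_+\underline{\times}\mathfrak{g}_-$ admits a paracomplex structure.
   Context: All Lie algebras are finite-dimensional over $\mathbb{R}$; $b_1(\mathfrak{h})=\dim\mathfrak{h}/[\mathfrak{h},\mathfrak{h}]$. A product structure on a Lie algebra $\mathfrak{g}$ is a linear map $E:\mathfrak{g}\to\mathfrak{g}$ with $E^2=\mathrm{id}$, $E\ne\pm\mathrm{id}$, satisfying $E[X,Y]=[E(X),Y]+[X,E(Y)]-E[E(X),E(Y)]$ for all $X,Y$; then the eigenspaces $\mathfrak{g}_+$ (eigenvalue $1$) and $\mathfrak{g}_-$ (eigenvalue $-1$) are subalgebras and $\mathfrak{g}=\mathfrak{g}_+\oplus\mathfrak{g}_-$. A paracomplex structure is a product structure with $\dim\mathfrak{g}_+=\dim\mathfrak{g}_-$. Product by generators: for Lie algebras $\mathfrak{h}_1,\mathfrak{h}_2$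 with $m_i=b_1(\mathfrak{h}_i)$, choose linear forms $\omega_1,\dots,\omega_{m_1}$ on $\mathfrak{h}_1$ vanishing on $[\mathfrak{h}_1,\mathfrak{h}_1]$ and inducing a basis of $(\mathfrak{h}_1/[\mathfrak{h}_1,\mathfrak{h}_1])^*$, similarly $\omega'_1,\dots,\omega'_{m_2}$ for $\mathfrak{h}_2$; $\mathfrak{h}_1\underline{\times}\mathfrak{h}_2$ is the Lie algebra on $\mathfrak{h}_1\oplus\mathfrak{h}_2\oplus\mathbb{R}^{m_1m_2}$ (basis $Z_{ij}$ of the last summand) whose bracket restricts to the given brackets on $\mathfrak{h}_1$ and $\mathfrak{h}_2$, with $Z_{ij}$ central and $[x,y]=\sum_{i,j}\omega_i(x)\omega'_j(y)Z_{ij}$ for $x\in\mathfrak{h}_1$, $y\in\mathfrak{h}_2$. *)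

(* Finite-dimensional real Lie algebras are represented in
   coordinates: a Lie algebra of dimension d is a bracket on 'rV[R]_d.
   Linear maps act on row vectors on the right: v |-> v *m E. *)
From HB Require Import structures.
From mathcomp Require Import all_boot all_order all_algebra.
From mathcomp Require Import reals.
Set Implicit Arguments. Unset Strict Implicit. Unset Printing Implicit Defensive.
Import Order.TTheory GRing.Theory Num.Theory.
Local Open Scope ring_scope.

Section Lie.
Variable R : realType.

Definition bracket (d : nat) := 'rV[R]_d -> 'rV[R]_d -> 'rV[R]_d.

Definition is_lie d (br : bracket d) : Prop :=
  [/\ (forall (a : R) u v w, br (a *: u + v) w = a *: br u w + br v w),
      (forall (a : R) u v w, br w (a *: u + v) = a *: br w u + br w v),
      (forall u, br u u = 0) &
      (forall u v w, br u (br v w) + br v (br w u) + br w (br u v) = 0)].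

(* [V,V] for the subspace V spanned by the rows of V: the span of the
   brackets of the spanning vectors (= span of all brackets of V, by
   bilinearity). *)
Definition derived d (br : bracket d) k (V : 'M[R]_(k, d)) : 'M[R]_d :=
  (\sum_(i < k) \sum_(j < k) <<br (row i V) (row j V)>>)%MS.

Fixpoint derived_series d (br : bracket d) (k : nat) : 'M[R]_d :=
  match k with
  | 0 => 1%:M
  | k'.+1 => derived br (derived_series br k')
  end.

Definition solvable_lie d (br : bracket d) : Prop :=
  exists k, derived_series br k = 0.

Definition sub_b1 d (br : bracket d) k (V : 'M[R]_(k, d)) : nat :=
  (\rank V - \rank (derived br V))%N.

Definition lie_b1 d (br : bracket d) : nat := sub_b1 br (1%:M : 'M[R]_d).

Definition product_structure d (br : bracket d) (E : 'M[R]_d) : Prop :=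
  [/\ E *m E = 1%:M, E <> 1%:M, E <> - 1%:M &
      forall x y, br x y *m E =
        br (x *m E) y + br x (y *m E) - br (x *m E) (y *m E) *m E].

Definition paracomplex d (br : bracket d) (E : 'M[R]_d) : Prop :=
  product_structure br E /\
  \rank (eigenspace E 1) = \rank (eigenspace E (-1)).

(* The Lie algebra structure induced on a subalgebra, in the coordinates
   given by a basis B (the rows of B, assumed row_free and spanning a
   subalgebra). *)
Definition transport d p (br : bracket d) (B : 'M[R]_(p, d)) : bracket p :=
  fun u v => br (u *m B) (v *m B) *m pinvmx B.

(* W : 'M_(p,k): its k columns are linear forms omega_1..omega_k on h
   (omega_i(x) = (x *m W) 0 i); they vanish on [h,h] and induce a basis of
   (h/[h,h])^*, with k = b_1(h). *)
Definition gen_forms p (b : bracket p) k (W : 'M[R]_(p, k)) : Prop :=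
  [/\ k = lie_b1 b, (forall u v, b u v *m W = 0) & \rank W = k].

(* product by generators h1 x_ h2 on h1 (+) h2 (+) R^{k1 k2};
   vector x = row_mx (row_mx a b) z, with a in h1, b in h2, z in R^{k1 k2}
   (Z_ij corresponds to coordinate mxvec_index i j). *)
Definition gen_prod p q k1 k2 (b1 : bracket p) (b2 : bracket q)
  (W1 : 'M[R]_(p, k1)) (W2 : 'M[R]_(q, k2)) : bracket (p + q + k1 * k2) :=
  fun x y =>
    let a := lsubmx (lsubmx x) in let b := rsubmx (lsubmx x) in
    let a' := lsubmx (lsubmx y) in let b' := rsubmx (lsubmx y) in
    row_mx (row_mx (b1 a a') (b2 b b'))
      (mxvec (((a *m W1)^T *m (b' *m W2)) - ((a' *m W1)^T *m (b *m W2)))).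

End Lie.

From HB Require Import structures.
From mathcomp Require Import all_boot all_order all_algebra.
From mathcomp Require Import reals ring zify.
Import Order.TTheory GRing.Theory Num.Theory.
Local Open Scope ring_scope.
Set Implicit Arguments. Unset Strict Implicit. Unset Printing Implicit Defensive.

(* Proof idea: on g_+ (+) g_- (+) R^(k1 k2) take E' = diag(1, -1, D) for an
   involution D of the centre.  E' is a product structure for every such D,
   because the mixed bracket changes sign with the g_- component.  Its
   eigenspaces have dimensions p + dim ker(D - 1) and q + dim ker(D + 1).
   As E is paracomplex, p = dim g_+ = dim g_- = q, and b_1(g_+) = 2m makes
   k1 k2 even, so a D with equally many eigenvalues 1 and -1 balances them. *)

Section Bracket.
Variables (R : realType) (d : nat) (br : bracket R d).
Hypothesis br_lie : is_lie br.

Lemma br0l w : br 0 w = 0.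
Proof.
case: br_lie => linl _ _ _; have := linl 1 0 0 w; rewrite !scale1r !addr0 => h.
by apply: (addrI (br 0 w)); rewrite addr0 -h.
Qed.

Lemma br0r w : br w 0 = 0.
Proof.
case: br_lie => _ linr _ _; have := linr 1 0 0 w; rewrite !scale1r !addr0 => h.
by apply: (addrI (br w 0)); rewrite addr0 -h.
Qed.

Lemma brDl u v w : br (u + v) w = br u w + br v w.
Proof. by case: br_lie => linl _ _ _; have := linl 1 u v w; rewrite !scale1r. Qed.

Lemma brDr u v w : br w (u + v) = br w u + br w v.
Proof. by case: br_lie => _ linr _ _; have := linr 1 u v w; rewrite !scale1r. Qed.

Lemma brZl a u w : br (a *: u) w = a *: br u w.
Proof.
by case: br_lie => linl _ _ _; have := linl a u 0 w; rewrite !addr0 br0l addr0.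
Qed.

Lemma brZr a u w : br w (a *: u) = a *: br w u.
Proof.
by case: br_lie => _ linr _ _; have := linr a u 0 w; rewrite !addr0 br0r addr0.
Qed.

Lemma brNl u w : br (- u) w = - br u w.
Proof. by rewrite -scaleN1r brZl scaleN1r. Qed.

Lemma brNr u w : br w (- u) = - br w u.
Proof. by rewrite -scaleN1r brZr scaleN1r. Qed.

Lemma br_suml I (r : seq I) (P : pred I) F w :
  br (\sum_(i <- r | P i) F i) w = \sum_(i <- r | P i) br (F i) w.
Proof.
apply: (big_rec2 (fun x y => br x w = y)); first exact: br0l.
by move=> i x y _ <-; rewrite brDl.
Qed.

Lemma br_sumr I (r : seq I) (P : pred I) F w :
  br w (\sum_(i <- r | P i) F i) = \sum_(i <- r | P i) br w (F i).
Proof.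
apply: (big_rec2 (fun x y => br w x = y)); first exact: br0r.
by move=> i x y _ <-; rewrite brDr.
Qed.

Definition subalgebra k (V : 'M[R]_(k, d)) :=
  forall u v, (u <= V)%MS -> (v <= V)%MS -> (br u v <= V)%MS.

Lemma br_sub_derived k (V : 'M[R]_(k, d)) u v :
  (u <= V)%MS -> (v <= V)%MS -> (br u v <= derived br V)%MS.
Proof.
move=> /mulmxKpV <- /mulmxKpV <-.
rewrite !mulmx_sum_row br_suml; apply: summx_sub => i _.
rewrite br_sumr; apply: summx_sub => j _.
rewrite brZl brZr; do 2 apply: scalemx_sub.
by apply: (sumsmx_sup i) => //; apply: (sumsmx_sup j) => //; rewrite genmxE.
Qed.

Lemma derivedS k l (V : 'M[R]_(k, d)) (U : 'M[R]_(l, d)) :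
  (V <= U)%MS -> (derived br V <= derived br U)%MS.
Proof.
move=> sVU; apply/sumsmx_subP => i _; apply/sumsmx_subP => j _.
by rewrite genmxE; apply: br_sub_derived; apply: submx_trans sVU; apply: row_sub.
Qed.

Lemma transportK p (B : 'M[R]_(p, d)) u v :
  subalgebra B -> transport br B u v *m B = br (u *m B) (v *m B).
Proof. by move=> clB; rewrite /transport mulmxKpV // clB ?submxMl. Qed.

Lemma derived_transport p (B : 'M[R]_(p, d)) : subalgebra B ->
  (derived (transport br B) 1%:M *m B :=: derived br B)%MS.
Proof.
move=> clB; apply: eqmx_trans (sumsmxMr_gen _ _ _) _; apply: eqmx_sums => i _.
apply: eqmx_trans (genmxE _) _; apply: eqmx_trans (sumsmxMr_gen _ _ _) _.
apply: eqmx_sums => j _; apply: eqmx_trans (genmxE _) _.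
apply: eqmx_trans (eqmxMr _ (genmxE _)) _; apply: eqmx_sym.
by apply: eqmx_trans (genmxE _) _; rewrite transportK // !row1 -!rowE.
Qed.

Lemma lie_b1_transport p (B : 'M[R]_(p, d)) k (V : 'M[R]_(k, d)) :
  subalgebra V -> row_free B -> (B == V)%MS ->
  lie_b1 (transport br B) = sub_b1 br V.
Proof.
move=> clV freeB /eqmxP eqBV.
have clB : subalgebra B by move=> u v; rewrite !eqBV; apply: clV.
have eq_der : (derived br B == derived br V)%MS by rewrite !derivedS ?eqBV.
rewrite /lie_b1 /sub_b1 mxrank1 -eqBV (eqP freeB) -(eqmx_rank eq_der).
by rewrite -(derived_transport clB) mxrankMfree.
Qed.

Lemma subalgebra_eigenspace1 (E : 'M[R]_d) :
  product_structure br E -> subalgebra (eigenspace E 1).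
Proof.
case=> _ _ _ derE u v /eigenspaceP uE /eigenspaceP vE; apply/eigenspaceP.
rewrite !scale1r in uE vE *; have := derE u v; rewrite uE vE => der_uv.
(* With [w := br u v], [der_uv] reads [w E = 2 w - w E], so [2 (w E) = 2 w]. *)
have two_neq0 : (2%:R : R) != 0 by rewrite pnatr_eq0.
apply: (scalerI two_neq0).
by rewrite !scaler_nat !mulr2n {1}der_uv subrK.
Qed.

End Bracket.

Section Eigenspaces.
Variable R : numFieldType.

Lemma rank_eigenspace_scalar n (a b : R) :
  \rank (eigenspace (a%:M : 'M_n) b) = if a == b then n else 0%N.
Proof.
rewrite /eigenspace mxrank_ker -raddfB /= -scalemx1.
case: eqP => [->|/eqP neq_ab]; first by rewrite subrr scale0r mxrank0 subn0.
by rewrite mxrank_scale_nz ?subr_eq0 // mxrank1 subnn.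
Qed.

Lemma rank_eigenspace_block_diag m n (A : 'M[R]_m) (B : 'M[R]_n) a :
  \rank (eigenspace (block_mx A 0 0 B) a) =
  (\rank (eigenspace A a) + \rank (eigenspace B a))%N.
Proof.
rewrite /eigenspace !mxrank_ker (scalar_mx_block m n a) opp_block_mx.
rewrite add_block_mx !oppr0 !addr0 rank_diag_block_mx.
have := rank_leq_row (A - a%:M); have := rank_leq_row (B - a%:M).
move: (\rank (A - _)) (\rank (B - _)) => rA rB; lia.
Qed.

Lemma rank_eigenspace1_gt0 n (E : 'M[R]_n) :
  E *m E = 1%:M -> E <> - 1%:M -> (0 < \rank (eigenspace E 1))%N.
Proof.
move=> EE neq_E_N1; rewrite lt0n mxrank_eq0 kermx_eq0 row_free_unit.
apply/negP => unit_E1.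
have E1_E1 : (E - 1%:M) *m (E + 1%:M) = 0.
  by rewrite mulmxBl !mulmxDr EE mulmx1 mul1mx mulmx1 [1%:M + E]addrC subrr.
apply: neq_E_N1; apply/eqP; rewrite -addr_eq0; apply/eqP.
by rewrite -(mulKmx unit_E1 (E + 1%:M)) E1_E1 mulmx0.
Qed.

Definition sign_mx k r : 'M[R]_k := copid_mx r - pid_mx r.

Lemma sign_mx_involutive k r : (r <= k)%N -> sign_mx k r *m sign_mx k r = 1%:M.
Proof.
move=> le_rk; rewrite /sign_mx mulmxBl !mulmxBr !mulmx1 pid_mx_id //.
by rewrite mul_copid_mx_pid // !subr0 subrr sub0r opprK subrK.
Qed.

Lemma rank_eigenspace_sign_mx1 k r :
  (r <= k)%N -> \rank (eigenspace (sign_mx k r) 1) = (k - r)%N.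
Proof.
move=> le_rk; rewrite /eigenspace mxrank_ker.
have -> : sign_mx k r - 1%:M = - 2%:R *: pid_mx r.
  by apply/matrixP => i j; rewrite /sign_mx /copid_mx !mxE; ring.
by rewrite mxrank_scale_nz ?oppr_eq0 ?pnatr_eq0 ?rank_pid_mx.
Qed.

Lemma rank_eigenspace_sign_mxN1 k r :
  (r <= k)%N -> \rank (eigenspace (sign_mx k r) (-1)) = r.
Proof.
move=> le_rk; rewrite /eigenspace mxrank_ker.
have -> : sign_mx k r - (-1)%:M = 2%:R *: copid_mx r.
  by apply/matrixP => i j; rewrite /sign_mx /copid_mx !mxE; ring.
by rewrite mxrank_scale_nz ?pnatr_eq0 ?rank_copid_mx ?subKn.
Qed.

Definition para_mx p q k (D : 'M[R]_k) : 'M[R]_(p + q + k) :=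
  block_mx (block_mx 1%:M 0 0 (-1)%:M) 0 0 D.

Lemma mul_para_mx p q k (D : 'M[R]_k) (x : 'rV[R]_(p + q + k)) :
  x *m para_mx p q D =
  row_mx (row_mx (lsubmx (lsubmx x)) (- rsubmx (lsubmx x))) (rsubmx x *m D).
Proof.
rewrite -{1}(hsubmxK x) -{1}(hsubmxK (lsubmx x)) /para_mx.
by rewrite !mul_row_block !mulmx0 !addr0 !add0r mulmx1 mul_mx_scalar scaleN1r.
Qed.

Lemma para_mx_involutive p q k (D : 'M[R]_k) :
  D *m D = 1%:M -> para_mx p q D *m para_mx p q D = 1%:M.
Proof.
move=> DD; rewrite /para_mx !mulmx_block !mulmx0 !mul0mx !addr0 !add0r mulmx1.
rewrite DD -scalar_mxM mulrNN mulr1.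
by rewrite -scalar_mx_block -scalar_mx_block.
Qed.

Lemma rank_eigenspace_para_mx1 p q k (D : 'M[R]_k) :
  \rank (eigenspace (para_mx p q D) 1) = (p + \rank (eigenspace D 1))%N.
Proof.
rewrite /para_mx (rank_eigenspace_block_diag (block_mx 1%:M 0 0 (-1)%:M) D).
rewrite (rank_eigenspace_block_diag (1%:M : 'M_p) (-1)%:M).
rewrite (rank_eigenspace_scalar p 1 1) (rank_eigenspace_scalar q (-1) 1).
by rewrite eqxx eqNr oner_eq0 addn0.
Qed.

Lemma rank_eigenspace_para_mxN1 p q k (D : 'M[R]_k) :
  \rank (eigenspace (para_mx p q D) (-1)) = (q + \rank (eigenspace D (-1)))%N.
Proof.
rewrite /para_mx (rank_eigenspace_block_diag (block_mx 1%:M 0 0 (-1)%:M) D).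
rewrite (rank_eigenspace_block_diag (1%:M : 'M_p) (-1)%:M).
rewrite (rank_eigenspace_scalar p 1 (-1)) (rank_eigenspace_scalar q (-1) (-1)).
by rewrite eqxx eq_sym eqNr oner_eq0.
Qed.

End Eigenspaces.

Arguments sign_mx {R} k r.

Lemma paracomplex_of_involution (R : realType) d (br : bracket R d) (E : 'M[R]_d) :
  (0 < d)%N -> E *m E = 1%:M ->
  (forall x y, br x y *m E =
     br (x *m E) y + br x (y *m E) - br (x *m E) (y *m E) *m E) ->
  \rank (eigenspace E 1) = \rank (eigenspace E (-1)) -> paracomplex br E.
Proof.
move=> d_gt0 EE derE eq_rank; split=> //; split=> // [E1 | EN1]; move: eq_rank.
  by rewrite E1 !rank_eigenspace_scalar eqxx eq_sym eqNr oner_eq0 => d0; lia.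
by rewrite EN1 -raddfN !rank_eigenspace_scalar eqxx eqNr oner_eq0; lia.
Qed.

Section GenProd.
Variables (R : realType) (p q k1 k2 : nat) (b1 : bracket R p) (b2 : bracket R q).
Variables (W1 : 'M[R]_(p, k1)) (W2 : 'M[R]_(q, k2)).
Hypotheses (b2Nl : forall u v, b2 (- u) v = - b2 u v)
           (b2Nr : forall u v, b2 u (- v) = - b2 u v).

Let gp := gen_prod b1 b2 W1 W2.

(* On the right, the centre components of the first two brackets cancel and
   that of the third is minus the one of [gp x y]; so any [D] works. *)
Lemma gen_prod_para_mx_derivation (D : 'M[R]_(k1 * k2)) x y :
  let E := para_mx p q D in
  gp x y *m E = gp (x *m E) y + gp x (y *m E) - gp (x *m E) (y *m E) *m E.
Proof.
move=> E; rewrite /E !mul_para_mx /gp /gen_prod !row_mxKl !row_mxKr.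
rewrite !b2Nl !b2Nr !opprK !mulNmx !mulmxN !opprK.
rewrite opp_row_mx !add_row_mx opp_row_mx !add_row_mx addrK addrK.
congr row_mx; move: (_ *m (_ *m W2)) (_ *m (_ *m W2)) => u v.
by rewrite -opprD raddfN addrN add0r -mulNmx -raddfN opprD opprK.
Qed.

Lemma gen_prod_paracomplex r s : (r + s = k1 * k2)%N -> (p + s = q + r)%N ->
  (0 < p + q + k1 * k2)%N -> exists E, paracomplex gp E.
Proof.
move=> rs_k eq_dim N_gt0; have le_rk : (r <= k1 * k2)%N by lia.
exists (para_mx p q (sign_mx (k1 * k2) r)).
apply: paracomplex_of_involution => //.
- exact/para_mx_involutive/sign_mx_involutive.
- exact: gen_prod_para_mx_derivation.
rewrite rank_eigenspace_para_mx1 rank_eigenspace_para_mxN1.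
by rewrite rank_eigenspace_sign_mx1 // rank_eigenspace_sign_mxN1 //; lia.
Qed.

End GenProd.

Unset Implicit Arguments.
Theorem corollary2 (R : realType) (n m : nat) (br : bracket R (2 * n))
  (X : 'M[R]_(2 * n)) (E : 'M[R]_(2 * n)) :
  is_lie br -> solvable_lie br ->
  X \in unitmx ->
  lie_b1 br = (4 * m)%N ->
  paracomplex br E ->
  (forall i : 'I_(2 * n), (i < 4 * m)%N ->
     ~~ (row i X <= derived br (1%:M : 'M[R]_(2 * n)))%MS) ->
  (forall i : 'I_(2 * n), (i < 2 * m)%N -> (row i X <= eigenspace E 1)%MS) ->
  (forall i : 'I_(2 * n), (2 * m <= i < 4 * m)%N ->
     (row i X <= eigenspace E (-1))%MS) ->
  sub_b1 br (eigenspace E 1) = (2 * m)%N ->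
  sub_b1 br (eigenspace E (-1)) = (2 * m)%N ->
  forall (p q : nat) (Bp : 'M[R]_(p, 2 * n)) (Bm : 'M[R]_(q, 2 * n)),
  row_free Bp -> (Bp == eigenspace E 1)%MS ->
  row_free Bm -> (Bm == eigenspace E (-1))%MS ->
  forall (k1 k2 : nat) (W1 : 'M[R]_(p, k1)) (W2 : 'M[R]_(q, k2)),
  gen_forms (transport br Bp) W1 -> gen_forms (transport br Bm) W2 ->
  exists E' : 'M[R]_(p + q + k1 * k2),
    paracomplex (gen_prod (transport br Bp) (transport br Bm) W1 W2) E'.
Proof.
move=> br_lie _ _ _ [ps_E eq_rank] _ _ _ b1_plus _ p q Bp Bm free_p eq_p free_m eq_m.
move=> k1 k2 W1 W2 [k1_b1 _ _] _.
have k1_2m : k1 = (2 * m)%N.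
  have cl_plus := subalgebra_eigenspace1 ps_E.
  by rewrite k1_b1 (lie_b1_transport br_lie cl_plus free_p eq_p).
have p_eq_q : p = q.
  rewrite -(eqP free_p) -(eqP free_m) (eqmx_rank eq_p) (eqmx_rank eq_m).
  exact: eq_rank.
have p_gt0 : (0 < p)%N.
  rewrite -(eqP free_p) (eqmx_rank eq_p).
  by case: ps_E => EE _ EN1 _; apply: rank_eigenspace1_gt0.
subst q; apply: (@gen_prod_paracomplex R p p k1 k2 _ _ W1 W2 _ _ (m * k2) (m * k2)).
- by move=> u v; rewrite /transport mulNmx brNl // mulNmx.
- by move=> u v; rewrite /transport mulNmx brNr // mulNmx.
- by rewrite k1_2m; lia.
- by [].
- by lia.
Qed.
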